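(* Let $F:L_n\to\Delta K$ be a $2$-filtration and let $p:\{0<1<\dots<2n\}\to L_n$ be a path. Define $f:L_n\to\{0,\dots,2n\}$ by $f(a)=\min\{x: a\le p(x)\}$, and let $G=F\circ p$. Then for any $x\le y$ in $\{0,\dots,2n\}$ and every dimension $q$, \[\mathsf{Dgm}_qG[x,y]=\sum_{[a,b]\in\mathsf{Int}\,L_n,\ f(a)=x,\ f(b)=y}\mathsf{Dgm}_qF[a,b].\]
   Context: $K$ is a finite simplicial complex, coefficients in a field. A path is a monotone injective map $p$ from the chain $\{0<\dots<2n\}$ to $L_n=\{0,\dots,n\}^2$ (product order) with $p(0)=(0,0)$, $p(2n)=(n,n)$, consecutive grades differing by $1$ in exactly one coordinate. For a finite poset $P$ with least element $\bot$ and greatest $\top$: $\mathsf{Int}\,P=\{[a,b]:a\le b\}$ with $[a,b]\le[c,d]$ iff $a\le c$, $b\le d$; a $P$-filtration is a monotone map $F$ from $P$ to subcomplexes of $K$ with $F(\bot)=\emptyset$, $F(\top)=K$; $ZB_qF[a,b]=\dim(Z_qF(a)\cap B_qF(b))$ for $b\ne\top$ and $\dim Z_qF(a)$ for $b=\top$ ($Z_q,B_q$ = $q$-cycles, $q$-boundaries); $\mathsf{Dgm}_qF$ is the unique function on $\mathsf{Int}\,P$ with $ZB_qF[c,d]=\sum_{[a,b]\le[c,d]}\mathsf{Dgm}_qF[a,b]$. A $2$-filtration is an $L_n$-filtration; $G$ is a $\{0,\dots,2n\}$-filtration. *)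

From HB Require Import structures.
From mathcomp Require Import all_boot all_order all_algebra.
Set Implicit Arguments. Unset Strict Implicit. Unset Printing Implicit Defensive.
Import GRing.Theory Num.Theory.

Definition is_complex (V : finType) (K : {set {set V}}) : Prop :=
  forall s, s \in K -> s != set0 /\ (forall t : {set V}, t \subset s -> t != set0 -> t \in K).

Definition is_subcomplex (V : finType) (K S : {set {set V}}) : Prop :=
  S \subset K /\ is_complex S.

(* Chains are row vectors indexed by all subsets of V (via enum_rank);
   vertices are ordered by enum_rank. *)
Section Chains.
Variables (k : fieldType) (V : finType).
Local Notation N := #|{set V}|.
Local Open Scope ring_scope.

Definition vpos (s : {set V}) (v : V) : nat :=
  #|[set u in s | (enum_rank u < enum_rank v)%N]|.

(* boundary matrix: entry (s,t) = coefficient of t in the boundary of s,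
   i.e. d s = sum_{v in s} (-1)^(pos v) (s \ v), the empty face omitted *)
Definition bd : 'M[k]_N :=
  \matrix_(i < N, j < N)
    \sum_(v in (enum_val i : {set V}))
      (if ((enum_val j : {set V}) != set0) && ((enum_val j : {set V}) == (enum_val i : {set V}) :\ v)
       then (-1) ^+ vpos (enum_val i : {set V}) v else 0).

(* q-chains of S : span of the q-simplices (q+1 vertices) of S *)
Definition chains (q : nat) (S : {set {set V}}) : 'M[k]_N :=
  \matrix_(i < N, j < N)
    (if [&& i == j, (enum_val i : {set V}) \in S & #|(enum_val i : {set V})| == q.+1]
     then 1 else 0).

Definition cycles (q : nat) (S : {set {set V}}) : 'M[k]_N :=
  (chains q S :&: kermx bd)%MS.

Definition boundaries (q : nat) (S : {set {set V}}) : 'M[k]_N :=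
  (chains q.+1 S *m bd)%MS.

End Chains.

Definition is_filtration (P : finType) (le : rel P) (bot top : P)
    (V : finType) (K : {set {set V}}) (F : P -> {set {set V}}) : Prop :=
  [/\ forall a b, le a b -> F a \subset F b,
      forall a, is_subcomplex K (F a),
      F bot = set0 & F top = K].

Definition ZB (k : fieldType) (P : finType) (top : P) (V : finType)
    (F : P -> {set {set V}}) (q : nat) (a b : P) : nat :=
  if b == top then \rank (cycles k q (F a))
  else \rank (cycles k q (F a) :&: boundaries k q (F b))%MS.

Definition is_Dgm (k : fieldType) (P : finType) (le : rel P) (top : P)
    (V : finType) (F : P -> {set {set V}}) (q : nat) (D : P -> P -> int) : Prop :=
  forall c d, le c d ->
    ((ZB k top F q c d)%:Z =
      \sum_(a : P) \sum_(b : P | [&& le a b, le a c & le b d]) D a b)%R.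

Definition Ln (n : nat) : finType := ('I_n.+1 * 'I_n.+1)%type.

Definition leL (n : nat) : rel (Ln n) :=
  fun a b => (a.1 <= b.1)%N && (a.2 <= b.2)%N.

Definition botL (n : nat) : Ln n := (ord0, ord0).
Definition topL (n : nat) : Ln n := (ord_max, ord_max).

Definition leC (m : nat) : rel 'I_m := fun x y => (x <= y)%N.

Definition is_path (n : nat) (p : 'I_(2 * n).+1 -> Ln n) : Prop :=
  [/\ forall x y : 'I_(2 * n).+1, (x <= y)%N -> leL (p x) (p y),
      injective p,
      p ord0 = botL n,
      p ord_max = topL n &
      forall x y : 'I_(2 * n).+1, y = x.+1 :> nat ->
        (((p y).1 = (p x).1.+1 :> nat) /\ ((p y).2 = (p x).2 :> nat)) \/
        (((p y).1 = (p x).1 :> nat) /\ ((p y).2 = (p x).2.+1 :> nat))].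

Definition pathmin (n : nat) (p : 'I_(2 * n).+1 -> Ln n) (a : Ln n) : nat :=
  \big[minn/(2 * n)%N]_(x : 'I_(2 * n).+1 | leL a (p x)) (x : nat).

(* Both diagrams are Moebius inversions of their ZB functions over the
   interval posets, so it suffices to compare cumulative sums.  The map
   f = pathrank p is left adjoint to the path: a <= p c iff f a <= c.  Hence
   ZB_G[c,d] = ZB_F[p c, p d] is the sum of Dgm_F over the intervals [a,b]
   with f a <= c and f b <= d, which is the cumulative sum at [c,d] of the
   pushforward of Dgm_F along f; uniqueness of Moebius inversion on the chain
   {0,...,2n} then identifies that pushforward with Dgm_G. *)

From mathcomp Require Import all_boot all_order all_algebra.
Import GRing.Theory.
Set Implicit Arguments. Unset Strict Implicit. Unset Printing Implicit Defensive.

Local Open Scope ring_scope.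

Definition interval_sum (P : finType) (le : rel P) (R : zmodType) (D : P -> P -> R)
    (c d : P) : R :=
  \sum_(a : P) \sum_(b : P | [&& le a b, le a c & le b d]) D a b.

Lemma interval_sumB (P : finType) (le : rel P) (R : zmodType) (D1 D2 : P -> P -> R) c d :
  interval_sum le (fun a b => D1 a b - D2 a b) c d =
  interval_sum le D1 c d - interval_sum le D2 c d.
Proof. by rewrite /interval_sum -sumrB; apply: eq_bigr => a _; rewrite sumrB. Qed.

Section MobiusInversion.
Variables (P : finType) (le : rel P) (R : zmodType).
Hypotheses (le_refl : reflexive le) (le_trans : transitive le) (le_anti : antisymmetric le).

Lemma subset_down a c : le a c -> [set b | le b a] \subset [set b | le b c].
Proof. by move=> lac; apply/subsetP => b; rewrite !inE => /le_trans; apply. Qed.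

Lemma proper_down a c : le a c -> a != c -> [set b | le b a] \proper [set b | le b c].
Proof.
move=> lac nac; apply/properP; split; first exact: subset_down.
exists c; rewrite inE ?le_refl //; apply: contra nac => lca.
by apply/eqP/le_anti; rewrite lac lca.
Qed.

Lemma interval_sum_eq0 (D : P -> P -> R) :
  (forall c d, le c d -> interval_sum le D c d = 0) ->
  forall c d, le c d -> D c d = 0.
Proof.
pose rk a := #|[set b | le b a]|.
move=> D0; suff IH N c d : (rk c + rk d < N)%N -> le c d -> D c d = 0.
  by move=> c d; apply: (IH (rk c + rk d).+1).
elim: N c d => [//|N IH] c d; rewrite ltnS => ltN lcd.
have := D0 c d lcd; rewrite /interval_sum (bigD1 c) //= (bigD1 d) /=; last first.
  by rewrite lcd !le_refl.
rewrite big1 => [|b /andP[/and3P[lcb _ lbd] nbd]]; last first.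
  apply: IH (leq_trans _ ltN) lcb; rewrite ltn_add2l.
  exact/proper_card/proper_down.
rewrite big1 ?addr0 // => a nac; apply: big1 => b /and3P[lab lac lbd].
apply: IH lab; apply: leq_trans ltN; rewrite -addSn leq_add //.
  exact/proper_card/proper_down.
exact/subset_leq_card/subset_down.
Qed.

Lemma interval_sum_inj (D1 D2 : P -> P -> R) :
  (forall c d, le c d -> interval_sum le D1 c d = interval_sum le D2 c d) ->
  forall c d, le c d -> D1 c d = D2 c d.
Proof.
move=> eqD c d lcd; apply/eqP; rewrite -subr_eq0; apply/eqP.
apply: (@interval_sum_eq0 (fun a b => D1 a b - D2 a b)) lcd => {}c {}d lcd.
by rewrite interval_sumB eqD ?subrr.
Qed.

End MobiusInversion.

Definition push_dgm (P I : finType) (le : rel P) (f : P -> I) (R : zmodType)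
    (D : P -> P -> R) (x y : I) : R :=
  \sum_(a : P) \sum_(b : P | [&& le a b, f a == x & f b == y]) D a b.

Section Pushforward.
Variables (P : finType) (le : rel P) (R : zmodType) (m : nat).
Variables (f : P -> 'I_m) (g : 'I_m -> P).
Hypothesis le_trans : transitive le.
Hypothesis galois : forall a c, le a (g c) = (f a <= c)%N.

Lemma galois_homo a b : le a b -> (f a <= f b)%N.
Proof. by move=> lab; rewrite -galois (le_trans lab) // galois. Qed.

Lemma interval_sum_push (D : P -> P -> R) c d :
  interval_sum (@leC m) (push_dgm le f D) c d = interval_sum le D (g c) (g d).
Proof.
rewrite /interval_sum /push_dgm /leC pair_big_dep [RHS]pair_big_dep /=.
rewrite (partition_big (fun ab => (f ab.1, f ab.2))
  (fun xy => [&& xy.1 <= xy.2, xy.1 <= c & xy.2 <= d]%N)) /=; last first.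
  by move=> [a b] /and3P[/= lab lac lbd]; rewrite (galois_homo lab) -!galois lac lbd.
apply: eq_bigr => -[x y] /and3P[_ /= lxc lyd]; rewrite pair_big_dep.
apply: eq_bigl => -[a b] /=; rewrite xpair_eqE !galois.
case: eqP => [->|_]; last by rewrite !andbF.
by case: eqP => [->|_]; rewrite ?lxc ?lyd ?andbF ?andbT.
Qed.

End Pushforward.

Lemma geq_bigminn_cond (I : finType) (P : pred I) (F : I -> nat) d i0 :
  P i0 -> (\big[minn/d]_(i | P i) F i <= F i0)%N.
Proof.
move=> Pi0; rewrite -big_filter.
have : i0 \in filter P (index_enum I) by rewrite mem_filter Pi0 mem_index_enum.
elim: (filter P _) => //= i s IHs; rewrite in_cons big_cons => /orP[/eqP <-|/IHs].
  exact: geq_minl.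
exact: leq_trans (geq_minr _ _).
Qed.

Lemma leL_trans n : transitive (@leL n).
Proof.
move=> b a c /andP[ab1 ab2] /andP[bc1 bc2].
by rewrite /leL (leq_trans ab1 bc1) (leq_trans ab2 bc2).
Qed.

Lemma leL_top n (a : Ln n) : leL a (topL n).
Proof. by rewrite /leL -ltnS ltn_ord -ltnS ltn_ord. Qed.

Lemma leC_refl m : reflexive (@leC m).
Proof. exact: leqnn. Qed.

Lemma leC_trans m : transitive (@leC m).
Proof. exact: leq_trans. Qed.

Lemma leC_anti m : antisymmetric (@leC m).
Proof. by move=> x y /anti_leq /val_inj. Qed.

Definition pathrank n (p : 'I_(2 * n).+1 -> Ln n) (a : Ln n) : 'I_(2 * n).+1 :=
  inord (pathmin p a).

Section PathRank.
Variables (n : nat) (p : 'I_(2 * n).+1 -> Ln n).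

Lemma pathmin_le a x : leL a (p x) -> (pathmin p a <= x)%N.
Proof. exact: (@geq_bigminn_cond _ (fun y => leL a (p y)) (fun y => y)). Qed.

Lemma pathmin_ltn a : (pathmin p a < (2 * n).+1)%N.
Proof.
rewrite ltnS; apply: (big_ind (fun v => v <= 2 * n)%N) => // [u v lu _|x _].
  exact: leq_trans (geq_minl u v) lu.
by rewrite -ltnS.
Qed.

Lemma pathrankE a : pathrank p a = pathmin p a :> nat.
Proof. exact: inordK (pathmin_ltn a). Qed.

Hypothesis p_top : p ord_max = topL n.

Lemma leL_pathrank a : leL a (p (pathrank p a)).
Proof.
rewrite /pathrank /pathmin; apply: (big_ind (fun v => leL a (p (inord v)))).
- by rewrite -[(2 * n)%N]/(nat_of_ord (@ord_max (2 * n))) inord_val p_top leL_top.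
- by move=> u v lu lv; rewrite /minn; case: ltnP.
- by move=> x; rewrite inord_val.
Qed.

Hypothesis p_mono : forall x y : 'I_(2 * n).+1, (x <= y)%N -> leL (p x) (p y).

Lemma leL_path_pathrank a c : leL a (p c) = (pathrank p a <= c)%N.
Proof.
apply/idP/idP => [/pathmin_le|/p_mono]; first by rewrite pathrankE.
exact: leL_trans (leL_pathrank a).
Qed.

End PathRank.

Lemma ZB_comp (k : fieldType) (P Q : finType) (topP : P) (topQ : Q) (V : finType)
    (F : P -> {set {set V}}) (g : Q -> P) q c d :
  injective g -> g topQ = topP ->
  ZB k topQ (fun z => F (g z)) q c d = ZB k topP F q (g c) (g d).
Proof. by move=> g_inj g_top; rewrite /ZB -g_top (inj_eq g_inj). Qed.

Theorem mainTheorem7 (k : fieldType) (V : finType) (K : {set {set V}})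
    (n : nat) (F : Ln n -> {set {set V}}) (p : 'I_(2 * n).+1 -> Ln n)
    (q : nat) (DF : Ln n -> Ln n -> int)
    (DG : 'I_(2 * n).+1 -> 'I_(2 * n).+1 -> int)
    (x y : 'I_(2 * n).+1) :
  is_complex K ->
  is_filtration (@leL n) (botL n) (topL n) K F ->
  is_path p ->
  is_Dgm k (@leL n) (topL n) F q DF ->
  is_Dgm k (@leC (2 * n).+1) ord_max (fun z => F (p z)) q DG ->
  (x <= y)%N ->
  DG x y = (\sum_(a : Ln n) \sum_(b : Ln n |
              [&& leL (n := n) a b, pathmin p a == (x : nat) & pathmin p b == (y : nat)]) DF a b)%R.
Proof.
move=> _ _ [p_mono p_inj _ p_top _] DgmF DgmG lxy.
have DG_push : DG x y = push_dgm (@leL n) (pathrank p) DF x y.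
  apply: (interval_sum_inj (@leC_refl _) (@leC_trans _) (@leC_anti _) _ lxy).
  move=> c d lcd.
  rewrite (interval_sum_push (@leL_trans n) (leL_path_pathrank p_top p_mono)).
  by rewrite /interval_sum -DgmG // (ZB_comp _ _ _ _ _ p_inj p_top) DgmF //; apply: p_mono.
rewrite DG_push; apply: eq_bigr => a _; apply: eq_bigl => b.
by rewrite -!val_eqE /= !pathrankE.
Qed.
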